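(* Let $G(\mathcal{M})=(R,T;E;c)$ and $G(\mathcal{M}')=(R,T;E;c')$ be two robot-task graphs where $c$ and $c'$ are injective on $E$. Let $\textsc{Auction}(\mathcal{M})=(W=(w_k),a)$ and $\textsc{Auction}(\mathcal{M}')=(W'=(w'_k),a')$. Suppose there exists some edge $e\in E$ which does not appear in $W$ such that $c'(f)=c(f)$ for all $f\in E\setminus\{e\}$. Then $\textsc{Auction}(\mathcal{M})=\textsc{Auction}(\mathcal{M}')$ if and only if $c'(e)>\max_{k\in B_e}c(w_k)$.
   Context: $R$ (robots) and $T$ (tasks) are finite disjoint sets with $R\neq\emptyset$, $|R\sqcup T|\ge3$. The robot-task graph $(R,T;E;c)$ has vertex set $R\sqcup T$, edge set $E$ consisting of all 2-element subsets of $R\sqcup T$, and a non-negative edge cost $c:E\to\mathbb{R}_+$ (with $\mathbb{R}_+=[0,\infty)\cup\{\infty\}$); injective means distinct edges have distinct costs. $\textsc{Auction}$ on $(R,T;E;c)$: set $A=\emptyset$ and $a(r)=0$ for all $r\in R$. For $k=1,\dots,|T|$ (bid rounds): let $w_k=\{s,t\}$ be the edge with $s\in R\cup A$, $t\in T\setminus A$ minimising $c(\{s,t\})$; set $a(t)=k$ and $A\leftarrow A\cup\{t\}$. The output is the list $W=(w_1,\dots,w_{|T|})$ of winning edges and the assignment function $a:R\sqcup T\to\{0,\dots,|T|\}$. Two auction outputs are equal if they have the same list and the same assignment function. For an edge $e=\{x,y\}$, $B_e=\{k\in\mathbb{Z}:\min(a(x),a(y))<k\le\max(a(x),a(y))\}$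 (computed from the output of $\textsc{Auction}(\mathcal{M})$); it is the set of bid rounds of $\textsc{Auction}(\mathcal{M})$ in which $e$ is considered. *)

From HB Require Import structures.
From mathcomp Require Import all_boot all_order all_algebra.
From mathcomp Require Import reals constructive_ereal.
Set Implicit Arguments. Unset Strict Implicit. Unset Printing Implicit Defensive.
Import Order.TTheory GRing.Theory Num.Theory.
Local Open Scope ereal_scope.

(* Vertex set R ⊔ T is a finite type V; [isR v] says v is a robot, the
   tasks are the vertices with [~~ isR v].  Edges are 2-element subsets
   of V, represented as [{set V}] of cardinality 2; a cost function is
   [c : {set V} -> \bar R] of which only the values on 2-sets matter. *)

Section Auction.
Variables (V : finType) (isR : pred V) (R : realType).

Definition is_edge (f : {set V}) : bool := #|f| == 2%N.

Definition cost_nonneg (c : {set V} -> \bar R) : Prop :=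
  forall f, is_edge f -> 0 <= c f.

Definition cost_injective (c : {set V} -> \bar R) : Prop :=
  forall f g, is_edge f -> is_edge g -> c f = c g -> f = g.

Definition cand (A : {set V}) (p : V * V) : bool :=
  [&& (isR p.1) || (p.1 \in A), ~~ isR p.2 & p.2 \notin A].

Definition pedge (p : V * V) : {set V} := [set p.1; p.2].

Definition bid (c : {set V} -> \bar R) (A : {set V}) : option (V * V) :=
  [pick p | cand A p && [forall q, cand A q ==> (c (pedge p) <= c (pedge q))]].

(* state after n bid rounds: (winning edges, assignment function, A) *)
Fixpoint auction_rec (c : {set V} -> \bar R) (n : nat)
  : seq {set V} * {ffun V -> nat} * {set V} :=
  match n with
  | 0 => ([::], [ffun=> 0%N], set0)
  | n'.+1 =>
      let: (W, a, A) := auction_rec c n' in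
      match bid c A with
      | Some p => (rcons W (pedge p),
                   [ffun x => if x == p.2 then n'.+1 else a x],
                   p.2 |: A)
      | None => (W, a, A)
      end
  end.

Definition num_tasks : nat := #|[set t | ~~ isR t]|.

Definition auction (c : {set V} -> \bar R) : seq {set V} * {ffun V -> nat} :=
  let: (W, a, _) := auction_rec c num_tasks in (W, a).

(* B_e for e = {x, y}, computed from an assignment function a *)
Definition Bset (a : {ffun V -> nat}) (x y : V) (k : nat) : bool :=
  (minn (a x) (a y) < k <= maxn (a x) (a y))%N.

(* max_{k ∈ B_e} c(w_k), with the max over the empty set being -oo *)
Definition maxB (c : {set V} -> \bar R) (x y : V) : \bar R :=
  let: (W, a) := auction c in
  \big[Order.max/-oo]_(1 <= k < (size W).+1 | Bset a x y k) c (nth set0 W k.-1).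

End Auction.

From HB Require Import structures.
From mathcomp Require Import all_boot all_order all_algebra.
From mathcomp Require Import reals constructive_ereal.
From mathcomp Require Import zify.
Import Order.TTheory GRing.Theory Num.Theory.
Local Open Scope ereal_scope.

(* The tasks assigned before bid round k are exactly those with 0 < a(v) < k,
   so a pair (s, t) is a candidate in round k iff a(s) < k <= a(t); hence the
   edge e = {x, y} is considered in round k iff k is in B_e.  Changing the cost
   of a losing edge e only matters in those rounds.  If c'(e) exceeds c(w_k)
   for every k in B_e, each round picks the same pair under c and c'
   (induction on the rounds).  Conversely, if the auction is unchanged, then in
   each round k of B_e the edge e was a candidate beaten by w_k under c', so
   c(w_k) = c'(w_k) <= c'(e), strictly by injectivity of c'. *)

Section Auction.
Local Set Implicit Arguments.
Local Unset Strict Implicit.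
Variables (R : realType) (V : finType) (isR : pred V).
Implicit Types (c : {set V} -> \bar R) (A : {set V}) (p q : V * V).

(* The state after n rounds: round n.+1 bids on [assigned c n], and its
   winning edge is entry n of the final list (auction isR c).1. *)
Local Notation winners c n := (auction_rec isR c n).1.1.
Local Notation assignment c n := (auction_rec isR c n).1.2.
Local Notation assigned c n := (auction_rec isR c n).2.

Lemma cand_is_edge A p : cand isR A p -> is_edge (pedge p).
Proof.
case/and3P=> src task_p2 free_p2; rewrite /is_edge cards2.
suff -> : p.1 != p.2 by [].
by apply/eqP=> same; move: src; rewrite same (negbTE task_p2) (negbTE free_p2).
Qed.

Lemma bid_someP c A p : bid isR c A = Some p ->
  cand isR A p /\ forall q, cand isR A q -> c (pedge p) <= c (pedge q).
Proof.
rewrite /bid; case: pickP => // q /andP[cand_q /forallP min_q] [<-].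
by split=> // r; apply/implyP.
Qed.

Lemma mem_set2_minn_maxn (a : V -> nat) x y v : v \in [set x; y] ->
  (minn (a x) (a y) <= a v <= maxn (a x) (a y))%N.
Proof. by case/set2P=> ->; rewrite ?geq_minl ?geq_minr ?leq_maxl ?leq_maxr. Qed.

Lemma auction_recS c n p : bid isR c (assigned c n) = Some p ->
  auction_rec isR c n.+1 =
    (rcons (winners c n) (pedge p),
     [ffun v => if v == p.2 then n.+1 else assignment c n v],
     p.2 |: assigned c n).
Proof. by rewrite /=; case: auction_rec => [[W a] A] /= ->. Qed.

Lemma auctionE c :
  auction isR c = (winners c (num_tasks isR), assignment c (num_tasks isR)).
Proof. by rewrite /auction; case: auction_rec => [[]]. Qed.

Hypothesis robot : exists r, isR r.

Lemma bid_exists c A : (#|A| < num_tasks isR)%N -> exists p, bid isR c A = Some p.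
Proof.
move=> small_A; have [r robot_r] := robot.
have : ~~ ([set t | ~~ isR t] \subset A).
  by apply: contraTN small_A => /subset_leq_card; rewrite -leqNgt.
case/subsetPn=> t; rewrite inE => task_t free_t.
have cand_rt : cand isR A (r, t) by rewrite /cand /= robot_r task_t free_t.
have [p cand_p min_p] := arg_minP (fun p => c (pedge p)) cand_rt.
rewrite /bid; case: pickP => [p' _|no_min]; first by exists p'.
have /negbT/negP[] := no_min p; rewrite cand_p /=.
by apply/forallP=> q; apply/implyP/min_p.
Qed.

Lemma auction_rec_inv c n : (n <= num_tasks isR)%N ->
  [/\ size (winners c n) = n,
      assigned c n = [set v | 0 < assignment c n v]%N,
      forall v, (assignment c n v <= n)%N,
      assigned c n \subset [set t | ~~ isR t] &
      #|assigned c n| = n].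
Proof.
elim: n => [_|n IH lt_n].
  split=> //=; last exact: cards0.
  - by apply/setP=> v; rewrite !inE ffunE.
  - by move=> v; rewrite ffunE.
  - exact: sub0set.
have [size_W assignedE le_a sub_tasks card_A] := IH (ltnW lt_n).
have [p bid_p] : exists p, bid isR c (assigned c n) = Some p.
  by apply: bid_exists; rewrite card_A.
have [/and3P[_ task_p2 free_p2] _] := bid_someP bid_p.
rewrite (auction_recS bid_p); split=> /=.
- by rewrite size_rcons size_W.
- by apply/setP=> v; rewrite !inE ffunE; case: eqP => // _; rewrite assignedE inE.
- by move=> v; rewrite ffunE; case: eqP => // _; exact: leqW.
- by rewrite subUset sub1set inE task_p2 sub_tasks.
- by rewrite cardsU1 free_p2 card_A.
Qed.

Lemma bid_assigned_exists c n : (n < num_tasks isR)%N ->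
  exists p, bid isR c (assigned c n) = Some p.
Proof.
by move=> lt_n; apply: bid_exists; have [_ _ _ _ ->] := auction_rec_inv c (ltnW lt_n).
Qed.

Lemma auction_rec_prefix c n m : (n <= m <= num_tasks isR)%N ->
  take n (winners c m) = winners c n /\
  [set v | 0 < assignment c m v <= n]%N = assigned c n.
Proof.
case/andP=> le_nm; rewrite -(subnKC le_nm); elim: (m - n)%N => [|d IH] le_m.
  rewrite addn0 in le_m *; have [size_W assignedE le_a _ _] := auction_rec_inv c le_m.
  rewrite take_oversize ?size_W //; split=> //.
  by rewrite assignedE; apply/setP=> v; rewrite !inE le_a andbT.
rewrite addnS in le_m *; have [take_W assignedE] := IH (ltnW le_m).
have [size_W assignedE' _ _ _] := auction_rec_inv c (ltnW le_m).
have [p bid_p] := bid_assigned_exists c le_m.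
have [/and3P[_ _ free_p2] _] := bid_someP bid_p.
rewrite (auction_recS bid_p) /= -cats1 takel_cat ?size_W ?leq_addr //.
split=> //; rewrite -assignedE; apply/setP=> v; rewrite !inE ffunE.
case: eqP => [->|_] //.
by move: free_p2; rewrite assignedE' inE -eqn0Ngt => /eqP ->; lia.
Qed.

Lemma size_auction c : size (auction isR c).1 = num_tasks isR.
Proof. by rewrite auctionE; have [] := auction_rec_inv c (leqnn _). Qed.

Lemma auction_le c v : ((auction isR c).2 v <= num_tasks isR)%N.
Proof. by rewrite auctionE; have [] := auction_rec_inv c (leqnn _). Qed.

Lemma auction_eq0 c v : ((auction isR c).2 v == 0)%N = isR v.
Proof.
have [_ assignedE _ sub_tasks card_A] := auction_rec_inv c (leqnn (num_tasks isR)).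
have : assigned c (num_tasks isR) = [set t | ~~ isR t].
  by apply/eqP; rewrite eqEcard sub_tasks card_A leqnn.
by rewrite auctionE assignedE eqn0Ngt => /setP/(_ v); rewrite !inE => ->; rewrite negbK.
Qed.

Lemma assigned_auction c n : (n <= num_tasks isR)%N ->
  assigned c n = [set v | 0 < (auction isR c).2 v <= n]%N.
Proof.
move=> le_n; have le_nN : (n <= num_tasks isR <= num_tasks isR)%N by rewrite le_n leqnn.
by rewrite auctionE; case: (auction_rec_prefix c le_nN).
Qed.

Lemma nth_auction c n p : (n < num_tasks isR)%N ->
  bid isR c (assigned c n) = Some p -> nth set0 (auction isR c).1 n = pedge p.
Proof.
move=> lt_n bid_p.
have le_n1 : (n.+1 <= num_tasks isR <= num_tasks isR)%N by rewrite lt_n leqnn.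
have [take_W _] := auction_rec_prefix c le_n1.
have [size_W _ _ _ _] := auction_rec_inv c (ltnW lt_n).
rewrite auctionE /= -(nth_take _ (ltnSn n)) take_W (auction_recS bid_p).
by rewrite nth_rcons size_W ltnn eqxx.
Qed.

Lemma cand_auctionE c n q : (n <= num_tasks isR)%N ->
  cand isR (assigned c n) q =
  ((auction isR c).2 q.1 <= n < (auction isR c).2 q.2)%N.
Proof. by move=> le_n; rewrite assigned_auction // /cand !inE -!(auction_eq0 c); lia. Qed.

Lemma cand_set2P c x y n : (n <= num_tasks isR)%N ->
  (exists2 q, cand isR (assigned c n) q & pedge q = [set x; y]) <->
  Bset (auction isR c).2 x y n.+1.
Proof.
move=> le_n; rewrite /Bset; split.
- case=> -[s t]; rewrite cand_auctionE //= => cand_st st_xy.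
  have s_xy : s \in [set x; y] by rewrite -st_xy set21.
  have t_xy : t \in [set x; y] by rewrite -st_xy set22.
  by move: cand_st (mem_set2_minn_maxn (auction isR c).2 s_xy)
    (mem_set2_minn_maxn (auction isR c).2 t_xy); lia.
- have [le_xy|lt_yx] := leqP ((auction isR c).2 x) ((auction isR c).2 y) => B.
    by exists (x, y) => //; rewrite cand_auctionE //=; lia.
  by exists (y, x); [rewrite cand_auctionE //=; lia | rewrite /pedge setUC].
Qed.

Lemma maxB_ltP c x y z : -oo < z ->
  maxB isR c x y < z <->
  forall n, Bset (auction isR c).2 x y n.+1 -> c (nth set0 (auction isR c).1 n) < z.
Proof.
move=> z_gt; rewrite /maxB.
case: (auction isR c) (size_auction c) (auction_le c) => W a /= size_W le_a.
split=> [lt_z n B|lt_z]; last first.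
  by apply: bigmax_lt => // -[|n] B //; exact: lt_z.
apply: (le_lt_trans _ lt_z); apply: (le_bigmax_seq _ n.+1) => //.
by rewrite mem_index_iota size_W; move: B (le_a x) (le_a y); rewrite /Bset; lia.
Qed.

Lemma bid_cost_change c c' A p e : cost_injective c ->
  bid isR c A = Some p -> pedge p != e ->
  (forall f, is_edge f -> f != e -> c' f = c f) ->
  (forall q, cand isR A q -> pedge q = e -> c (pedge p) < c' e) ->
  bid isR c' A = bid isR c A.
Proof.
move=> inj_c bid_p p_ne_e agree e_loses.
have [cand_p min_p] := bid_someP bid_p.
have c'_p : c' (pedge p) = c (pedge p) by apply: agree; first exact: cand_is_edge cand_p.
have c_minE q : cand isR A q -> c (pedge q) <= c (pedge p) -> pedge q = pedge p.
  move=> cand_q le_qp.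
  apply: inj_c; [exact: cand_is_edge cand_q | exact: cand_is_edge cand_p |].
  by apply/le_anti; rewrite le_qp min_p.
rewrite /bid; apply: eq_pick => q /=; case cand_q: (cand isR A q) => //=.
transitivity (pedge q == pedge p).
  apply/forallP/eqP.
  - move=> /(_ p)/implyP/(_ cand_p); rewrite c'_p => le_qp.
    have q_ne_e : pedge q != e.
      by apply: contraTneq le_qp => qe; rewrite -ltNge qe; exact: e_loses cand_q qe.
    by apply: c_minE; rewrite // -(agree _ (cand_is_edge cand_q) q_ne_e).
  - move=> qp r; apply/implyP=> cand_r; rewrite qp c'_p.
    have [re|r_ne_e] := eqVneq (pedge r) e.
      by rewrite re; exact: ltW (e_loses r cand_r re).
    by rewrite agree ?(cand_is_edge cand_r) ?min_p.
apply/eqP/forallP.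
- by move=> qp r; apply/implyP=> cand_r; rewrite qp min_p.
- by move=> /(_ p)/implyP/(_ cand_p); apply: c_minE.
Qed.

Section LosingEdge.
Variables (c c' : {set V} -> \bar R) (x y : V).
Hypothesis agree : forall f, is_edge f -> f != [set x; y] -> c' f = c f.
Hypothesis e_unused : [set x; y] \notin (auction isR c).1.

Lemma nth_auction_neq n : (n < num_tasks isR)%N ->
  nth set0 (auction isR c).1 n != [set x; y].
Proof.
by move=> lt_n; apply: contraNneq e_unused => <-; rewrite mem_nth ?size_auction.
Qed.

Lemma lt_winner_of_auction_eq : cost_injective c' ->
  auction isR c = auction isR c' ->
  forall n, Bset (auction isR c).2 x y n.+1 ->
  c (nth set0 (auction isR c).1 n) < c' [set x; y].
Proof.
move=> inj_c' same n B.
have lt_n : (n < num_tasks isR)%N.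
  by move: B (auction_le c x) (auction_le c y); rewrite /Bset; lia.
have [p bid_p] := bid_assigned_exists c' lt_n.
have [cand_p min_p] := bid_someP bid_p.
have [q cand_q q_e] : exists2 q, cand isR (assigned c' n) q & pedge q = [set x; y].
  by apply/(cand_set2P c' x y (ltnW lt_n)); rewrite -same.
have w_p : nth set0 (auction isR c).1 n = pedge p by rewrite same; exact: nth_auction.
have p_ne_q : pedge p != pedge q by rewrite -w_p q_e nth_auction_neq.
have c'_p : c' (pedge p) = c (pedge p).
  by apply: agree; [exact: cand_is_edge cand_p | rewrite -w_p nth_auction_neq].
rewrite w_p -c'_p -q_e lt_neqAle min_p // andbT; apply: (contra_neq _ p_ne_q).
by apply: inj_c'; [exact: cand_is_edge cand_p | exact: cand_is_edge cand_q].
Qed.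

Lemma auction_eq_of_lt_winner : cost_injective c ->
  (forall n, Bset (auction isR c).2 x y n.+1 ->
     c (nth set0 (auction isR c).1 n) < c' [set x; y]) ->
  auction isR c' = auction isR c.
Proof.
move=> inj_c e_loses.
suff same n : (n <= num_tasks isR)%N -> auction_rec isR c' n = auction_rec isR c n.
  by rewrite !auctionE same.
elim: n => [//|n IH] lt_n.
have [p bid_p] := bid_assigned_exists c lt_n.
have w_p := nth_auction lt_n bid_p.
have bid'_p : bid isR c' (assigned c' n) = Some p.
  rewrite IH ?(ltnW lt_n) // -bid_p.
  apply: (bid_cost_change inj_c bid_p _ agree); first by rewrite -w_p nth_auction_neq.
  move=> q cand_q q_e; rewrite -w_p; apply: e_loses.
  by apply/(cand_set2P c x y (ltnW lt_n)); exists q.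
by rewrite (auction_recS bid'_p) (auction_recS bid_p) IH ?(ltnW lt_n).
Qed.

End LosingEdge.
End Auction.

Theorem lemma6 (R : realType) (V : finType) (isR : pred V)
    (c c' : {set V} -> \bar R) (x y : V) :
  (exists r, isR r) ->
  (3 <= #|V|)%N ->
  cost_nonneg c -> cost_nonneg c' ->
  cost_injective c -> cost_injective c' ->
  x != y ->
  [set x; y] \notin (auction isR c).1 ->
  (forall f, is_edge f -> f != [set x; y] -> c' f = c f) ->
  (auction isR c = auction isR c' <-> maxB isR c x y < c' [set x; y]).
Proof.
move=> robot _ _ c'_ge0 inj_c inj_c' x_ne_y e_unused agree.
have e_edge : is_edge [set x; y] by rewrite /is_edge cards2 x_ne_y.
have e_gt : -oo < c' [set x; y] := lt_le_trans ltNy0 (c'_ge0 _ e_edge).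
have maxBP := maxB_ltP robot c x y e_gt.
split=> [same | /maxBP e_loses].
  by apply/maxBP => n; exact: (lt_winner_of_auction_eq robot agree e_unused inj_c' same).
by symmetry; exact: (auction_eq_of_lt_winner robot agree e_unused inj_c e_loses).
Qed.
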